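(* Let $n\in\{6,10,12\}$ and $V_0=\{v\in\{-1,1\}^n : v_1=1,\ \sum_i v_i=0\}$. Then there exist signs $\varepsilon_v\in\{-1,1\}$, $v\in V_0$, such that $\sum_{v\in V_0}\varepsilon_v v=0$. *)

From mathcomp Require Import all_boot all_order all_algebra.
Set Implicit Arguments. Unset Strict Implicit. Unset Printing Implicit Defensive.
Import GRing.Theory Num.Theory.
Local Open Scope ring_scope.

(* A vector v in {-1,1}^n is encoded by b : {ffun 'I_n -> bool},
   with coordinate i equal to sgnb (b i) : int, where true |-> 1, false |-> -1. *)
Definition sgnb (x : bool) : int := if x then 1 else -1.

Definition pmvec (n : nat) (b : {ffun 'I_n -> bool}) : 'rV[int]_n :=
  \row_(i < n) sgnb (b i).

(* V_0 = { v in {-1,1}^n : v_1 = 1, sum_i v_i = 0 } (first coordinate = index 0). *)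
Definition V0 (n : nat) : {set {ffun 'I_n -> bool}} :=
  [set b : {ffun 'I_n -> bool} | [forall i : 'I_n, (val i == 0%N) ==> b i] &&
           (\sum_(i < n) sgnb (b i) == 0)].

From mathcomp Require Import all_boot all_order all_algebra.
From mathcomp Require Import zify.
Import GRing.Theory Num.Theory.
Local Open Scope ring_scope.

(* Let rho rotate the coordinates 2..n cyclically and fix the first one; rho
   preserves V_0.  If the signs eps are rho-invariant and sum to zero over V_0,
   then the signed sum S of the v in V_0 has S_1 = sum eps_v = 0, its other
   coordinates are all equal by invariance, and its coordinates add up to
   sum_v eps_v (sum_i v_i) = 0; hence S = 0.  A rho-invariant sign is read off
   the number of cyclically adjacent +1's among the coordinates 2..n, and that
   it sums to zero over V_0 is a finite computation for n = 6, 10, 12. *)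

Lemma ord_neq0 n (i : 'I_n.+1) : (i != ord0) = (0 < i)%N.
Proof. by rewrite -val_eqE lt0n. Qed.

Lemma V0E n (v : {ffun 'I_n.+1 -> bool}) :
  (v \in V0 n.+1) = v ord0 && (\sum_i sgnb (v i) == 0).
Proof.
rewrite inE; congr andb; apply/forallP/idP => [/(_ ord0) // | v0 i].
by apply/implyP => /eqP i0; rewrite (_ : i = ord0) //; apply: val_inj.
Qed.

Section TailRotation.
Variable m : nat.
Implicit Types (i : 'I_m.+1) (v : {ffun 'I_m.+1 -> bool}).

Definition tail_succ i : 'I_m.+1 :=
  inord (if i == 0 :> nat then 0 else if (i < m)%N then i.+1 else 1).

Lemma val_tail_succ i :
  tail_succ i = (if i == 0 :> nat then 0 else if (i < m)%N then i.+1 else 1)%N :> nat.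
Proof.
rewrite /tail_succ inordK //; have := ltn_ord i.
by case: eqP => // i0; case: (ltnP i m); lia.
Qed.

Lemma tail_succ0 : tail_succ ord0 = ord0.
Proof. by apply: val_inj => /=; rewrite val_tail_succ. Qed.

Lemma tail_succ_neq0 i : (tail_succ i != ord0) = (i != ord0).
Proof.
rewrite !ord_neq0 val_tail_succ; case: eqP => [-> // | /eqP i0].
by rewrite [RHS]lt0n i0; case: (i < m)%N.
Qed.

Lemma tail_succ_inj : injective tail_succ.
Proof.
move=> i j /eqP; rewrite -val_eqE /= !val_tail_succ => /eqP eq_ij; apply: val_inj => /=.
move: eq_ij (ltn_ord i) (ltn_ord j).
by case: eqP; case: eqP; case: (ltnP i m); case: (ltnP j m); lia.
Qed.

Definition tail_rot v : {ffun 'I_m.+1 -> bool} := [ffun i => v (tail_succ i)].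

Lemma tail_rot_inj : injective tail_rot.
Proof.
move=> v w /ffunP eq_vw; apply/ffunP => i.
have [pred_succ _ succ_pred] := injF_bij tail_succ_inj.
by have := eq_vw (pred_succ i); rewrite !ffunE succ_pred.
Qed.

Lemma tail_rot_V0 v : (tail_rot v \in V0 m.+1) = (v \in V0 m.+1).
Proof.
rewrite !V0E /tail_rot ffunE tail_succ0.
by under eq_bigr do rewrite ffunE; rewrite [in RHS](reindex_inj tail_succ_inj).
Qed.

End TailRotation.

Arguments tail_succ {m}.
Arguments tail_rot {m}.

Section InvariantWeights.
Variables (m : nat) (w : {ffun 'I_m.+1 -> bool} -> int).
Implicit Types (j : 'I_m.+1) (v : {ffun 'I_m.+1 -> bool}).
Hypothesis w_tail_rot : forall v, w (tail_rot v) = w v.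
Hypothesis sum_w_V0 : \sum_(v in V0 m.+1) w v = 0.

Let coord j := \sum_(v in V0 m.+1) w v * sgnb (v j).

Lemma coord_tail_succ j : coord (tail_succ j) = coord j.
Proof.
rewrite /coord [RHS](reindex_inj (@tail_rot_inj m)).
apply: eq_big => [v | v _]; first by rewrite tail_rot_V0.
by rewrite w_tail_rot ffunE.
Qed.

Lemma coord0 : coord ord0 = 0.
Proof.
rewrite /coord -[RHS]sum_w_V0; apply: eq_bigr => v.
by rewrite V0E => /andP[-> _]; rewrite mulr1.
Qed.

Lemma coord_tail j : j != ord0 -> coord j = coord (inord 1).
Proof.
rewrite ord_neq0; case: j => k /=; elim: k => [//|k IH] lt_k _.
have [k0 | k_gt0] := posnP k.
  by congr coord; apply: val_inj; rewrite /= inordK; lia.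
rewrite -(IH (ltnW lt_k) k_gt0) -[RHS]coord_tail_succ; congr coord; apply: val_inj => /=.
by rewrite val_tail_succ /= (negPf (lt0n_neq0 k_gt0)) -ltnS lt_k.
Qed.

Lemma sum_coord : \sum_j coord j = 0.
Proof.
rewrite /coord exchange_big big1 // => v.
by rewrite V0E => /andP[_ /eqP sum_v]; rewrite -mulr_sumr sum_v mulr0.
Qed.

Lemma sum_V0_weighted : \sum_(v in V0 m.+1) w v *: pmvec v = 0.
Proof.
apply/rowP => j; rewrite summxE !mxE.
transitivity (coord j); first by apply: eq_bigr => v _; rewrite !mxE.
have [-> | j0] := eqVneq j ord0; first exact: coord0.
have coord_lift i : coord (lift ord0 i) = coord (inord 1).
  by rewrite coord_tail // eq_sym neq_lift.
have := sum_coord; rewrite big_ord_recl coord0 add0r.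
under eq_bigr do rewrite coord_lift.
rewrite sumr_const card_ord => /eqP; rewrite mulrn_eq0 => /orP[/eqP m0 | /eqP <-].
  by move: (ltn_ord j) j0; rewrite ord_neq0; lia.
exact: coord_tail.
Qed.

End InvariantWeights.

Definition tail_adjacencies {m} (v : {ffun 'I_m.+1 -> bool}) : nat :=
  \sum_(i < m.+1 | i != ord0) (v i && v (tail_succ i)).

Lemma tail_adjacencies_rot m (v : {ffun 'I_m.+1 -> bool}) :
  tail_adjacencies (tail_rot v) = tail_adjacencies v.
Proof.
rewrite /tail_adjacencies [RHS](reindex_inj (@tail_succ_inj m)).
by apply: eq_big => [i | i _]; rewrite ?tail_succ_neq0 ?ffunE.
Qed.

(* Counted by their number of adjacencies, the v in V_0 split as 5, 5 (n = 6),
   9, 54, 54, 9 (n = 10) and 11, 110, 220, 110, 11 (n = 12): the counts 0 and 2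
   make up exactly half of V_0 in each case. *)
Definition adjacency_sign {m} (v : {ffun 'I_m.+1 -> bool}) : int :=
  sgnb (tail_adjacencies v \in [:: 0; 2]%N).

(* The finType enumeration of {ffun 'I_n -> bool} is far too slow to compute
   with, so sums over it are transported to sums over boolean sequences. *)
Fixpoint bool_seqs n : seq (seq bool) :=
  if n is n'.+1 then [seq b :: s | b <- [:: true; false], s <- bool_seqs n']
  else [:: [::]].

Lemma mem_bool_seqs n s : (s \in bool_seqs n) = (size s == n).
Proof.
elim: n s => [|n IH] s; first by case: s.
apply/allpairsP/idP => [[[b s'] [_ /=]] | ]; first by rewrite IH => /eqP <- ->.
case: s => [|b s] //=; rewrite eqSS -IH => s_in.
by exists (b, s); split => //; case: b.
Qed.

Lemma uniq_bool_seqs n : uniq (bool_seqs n).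
Proof.
elim: n => // n IH; apply: allpairs_uniq => //.
by move=> [b s] [b' s'] _ _ [-> ->].
Qed.

Definition ffun_of_seq n (s : seq bool) : {ffun 'I_n -> bool} :=
  [ffun i : 'I_n => nth false s i].

Lemma ffun_of_seq_fgraph n (v : {ffun 'I_n -> bool}) : ffun_of_seq n (fgraph v) = v.
Proof. by apply/ffunP => i; rewrite ffunE nth_fgraph_ord. Qed.

Lemma big_ffun_bool_seqs (R : Type) (idx : R) (op : Monoid.com_law idx) n
    (F : {ffun 'I_n -> bool} -> R) :
  \big[op/idx]_v F v = \big[op/idx]_(s <- bool_seqs n) F (ffun_of_seq n s).
Proof.
rewrite -(big_map (ffun_of_seq n) xpredT); apply: perm_big; apply: uniq_perm.
- exact: index_enum_uniq.
- rewrite map_inj_in_uniq ?uniq_bool_seqs // => s1 s2.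
  rewrite !mem_bool_seqs => /eqP sz1 /eqP sz2 /ffunP eq12.
  apply: (@eq_from_nth _ false) => [|i]; first by rewrite sz1 sz2.
  by rewrite sz1 => lt_in; have := eq12 (Ordinal lt_in); rewrite !ffunE.
- move=> v; rewrite mem_index_enum; apply/esym/mapP.
  exists (val (fgraph v)); last by rewrite ffun_of_seq_fgraph.
  by rewrite mem_bool_seqs size_tuple card_ord.
Qed.

Lemma ffun_of_seq_V0 n s :
  (ffun_of_seq n.+1 s \in V0 n.+1) =
  nth false s 0 && (\sum_(0 <= i < n.+1) sgnb (nth false s i) == 0).
Proof.
rewrite V0E ffunE big_mkord; congr (_ && (_ == 0)).
by apply: eq_bigr => i _; rewrite ffunE.
Qed.

Lemma tail_adjacencies_ffun_of_seq m s :
  tail_adjacencies (ffun_of_seq m.+1 s) =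
  (\sum_(1 <= i < m.+1) (nth false s i && nth false s (if i < m then i.+1 else 1)))%N.
Proof.
rewrite /tail_adjacencies big_mkcond big_ord_recl eqxx /= add0n big_add1 big_mkord.
by apply: eq_bigr => i _; rewrite !ffunE val_tail_succ /=.
Qed.

Lemma sum_adjacency_sign_V0 m : m \in [:: 5; 9; 11]%N ->
  \sum_(v in V0 m.+1) adjacency_sign v = 0.
Proof.
move=> hm; rewrite big_mkcond big_ffun_bool_seqs.
under eq_bigr do rewrite ffun_of_seq_V0 /adjacency_sign tail_adjacencies_ffun_of_seq.
by move: hm; rewrite !inE => /or3P[] /eqP ->; rewrite !unlock; vm_compute.
Qed.

Theorem lemmaA1 (n : nat) (hn : n \in [:: 6%N; 10%N; 12%N]) :
  exists eps : {ffun 'I_n -> bool} -> int,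
    (forall v, v \in V0 n -> eps v = 1 \/ eps v = -1) /\
    \sum_(v in V0 n) eps v *: pmvec v = 0.
Proof.
have [m -> hm] : exists2 m, n = m.+1 & m \in [:: 5; 9; 11]%N.
  by move: hn; rewrite !inE => /or3P[] /eqP ->; eexists.
exists adjacency_sign; split.
  by move=> v _; rewrite /adjacency_sign /sgnb; case: ifP; [left | right].
apply: sum_V0_weighted; last exact: sum_adjacency_sign_V0.
by move=> v; rewrite /adjacency_sign tail_adjacencies_rot.
Qed.
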